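(* Consider $n$ bosonic modes with drift matrix $A$ (satisfying $A+A^{\sf T}<0$) and diffusion matrix $D$ (with strictly positive eigenvalues), continuously monitored by a general-dyne measurement. Let $\sigma_c$ be a conditional steady-state covariance matrix obtainable in this setting, i.e. a real symmetric $2n\times 2n$ matrix with $\sigma_c+i\Omega\ge0$ and $A\sigma_c+\sigma_c A^{\sf T}+D\ge 0$. Let $\lambda^{\downarrow}_1\ge\lambda^{\downarrow}_2$ be the two largest eigenvalues of $\sigma_c$, let $\alpha^{\uparrow}_1\le\alpha^{\uparrow}_2\le\dots$ be the (strictly positive) eigenvalues of $-(A+A^{\sf T})$ in increasing order, and let $\delta^{\downarrow}_1\ge\delta^{\downarrow}_2\ge\dots$ be the eigenvalues of $D$ in decreasing order. Then $$\lambda^{\downarrow}_1\lambda^{\downarrow}_2\le\frac{(\delta^{\downarrow}_1+\delta^{\downarrow}_2)^2}{4\,\alpha^{\uparrow}_1\alpha^{\uparrow}_2}.$$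
   Context: Setting: $n$ bosonic modes with canonical operators $\hat{\mathbf R}=(\hat x_1,\hat p_1,\dots,\hat x_n,\hat p_n)^{\sf T}$, $[\hat R_j,\hat R_k]=i\Omega_{jk}$, $\Omega=\bigoplus_{j=1}^n\begin{pmatrix}0&1\\-1&0\end{pmatrix}$. The covariance matrix (CM) of a state $\varrho$ is $\sigma_{jk}=\mathrm{Tr}(\{\hat R_j,\hat R_k\}\varrho)-2\mathrm{Tr}(\hat R_j\varrho)\mathrm{Tr}(\hat R_k\varrho)$. The system evolves by the Lindblad master equation $\dot\varrho=-i[\hat H,\varrho]+\sum_{j=1}^L\mathcal D[\hat c_j]\varrho$, with $\hat H=\frac12\hat{\mathbf R}^{\sf T}H\hat{\mathbf R}$ ($H$ real symmetric), $\hat{\mathbf c}=\widetilde C\hat{\mathbf R}$ ($\widetilde C$ a complex $L\times 2n$ matrix), $\mathcal D[O]\varrho=O\varrho O^\dagger-\frac12(O^\dagger O\varrho+\varrho O^\dagger O)$. The drift matrix is $A=\Omega(H+\mathrm{Im}[\widetilde C^\dagger\widetilde C])$ and the diffusion matrix is $D=2\Omega\,\mathrm{Re}[\widetilde C^\dagger\widetilde C]\Omega^{\sf T}$, so that without monitoring $\dot\sigma=A\sigma+\sigma A^{\sf T}+D$. Under continuous general-dyne monitoring of the environment (any diffusive Gaussian unravelling), the conditional CM $\sigma_c$ evolves deterministically, and a CM $\sigma_c$ is obtainable as a stabilising steady-state conditional CM for some general-dyne unravelling if and only if $\sigma_c+i\Omega\ge0$ and $A\sigma_c+\sigma_cA^{\sf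 T}+D\ge0$. *)

From HB Require Import structures.
From mathcomp Require Import all_boot all_order all_algebra.
From mathcomp Require Import complex.
Set Implicit Arguments. Unset Strict Implicit. Unset Printing Implicit Defensive.
Import Order.TTheory GRing.Theory Num.Theory.
Local Open Scope ring_scope.

Section Defs.
Variable R : rcfType.

(* Symplectic form Omega = (+)_{j=1}^n [[0,1],[-1,0]] with ordering
   (x_1,p_1,...,x_n,p_n): indices 2k (x_k) and 2k+1 (p_k), 0-based. *)
Definition Omega (n : nat) : 'M[R]_(2 * n) :=
  \matrix_(i, j) (if ~~ odd i && (j == i.+1 :> nat) then 1
                  else if odd i && (j.+1 == i :> nat) then -1 else 0).

Definition ReM m p (M : 'M[R[i]]_(m, p)) : 'M[R]_(m, p) := map_mx (@complex.Re R) M.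
Definition ImM m p (M : 'M[R[i]]_(m, p)) : 'M[R]_(m, p) := map_mx (@complex.Im R) M.
Definition toC m p (M : 'M[R]_(m, p)) : 'M[R[i]]_(m, p) :=
  map_mx (fun x => (x%:C)%C) M.
Definition adjM m p (M : 'M[R[i]]_(m, p)) : 'M[R[i]]_(p, m) :=
  (map_mx (@conjc R) M)^T.

Definition drift n L (H : 'M[R]_(2 * n)) (Ct : 'M[R[i]]_(L, 2 * n)) :
  'M[R]_(2 * n) := Omega n *m (H + ImM (adjM Ct *m Ct)).
Definition diffusion n L (Ct : 'M[R[i]]_(L, 2 * n)) : 'M[R]_(2 * n) :=
  2%:R *: (Omega n *m ReM (adjM Ct *m Ct) *m (Omega n)^T).

Definition sym_mx m (M : 'M[R]_m) : Prop := M^T = M.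
Definition psd_real m (M : 'M[R]_m) : Prop :=
  sym_mx M /\ forall v : 'cV[R]_m, 0 <= (v^T *m M *m v) 0 0.
Definition negdef_real m (M : 'M[R]_m) : Prop :=
  sym_mx M /\ forall v : 'cV[R]_m, v != 0 -> (v^T *m M *m v) 0 0 < 0.
Definition psd_complex m (M : 'M[R[i]]_m) : Prop :=
  forall v : 'cV[R[i]]_m,
    complex.Im ((adjM v *m M *m v) 0 0) = 0 /\ 0 <= complex.Re ((adjM v *m M *m v) 0 0).

(* s is the list of eigenvalues of M, counted with (algebraic) multiplicity:
   the characteristic polynomial splits as prod_{x in s} (X - x). *)
Definition eigenvalues_of m (M : 'M[R]_m) (s : seq R) : Prop :=
  char_poly M = \prod_(x <- s) ('X - x%:P).
Definition eigs_decreasing m (M : 'M[R]_m) (s : seq R) : Prop :=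
  eigenvalues_of M s /\ sorted (fun x y => y <= x) s.
Definition eigs_increasing m (M : 'M[R]_m) (s : seq R) : Prop :=
  eigenvalues_of M s /\ sorted (fun x y => x <= y) s.

End Defs.

(* Let u, v be orthonormal eigenvectors of sigma for lambda_1, lambda_2.
   Evaluating the positive matrix A sigma + sigma A^T + D at u gives
   lambda_1 a_u <= d_u, where a_u and d_u are the Rayleigh quotients of
   -(A + A^T) and D at u; likewise lambda_2 a_v <= d_v.  By Ky Fan's principle
   a_u, a_v >= alpha_1 and a_u + a_v >= alpha_1 + alpha_2, so a_u a_v >= alpha_1 alpha_2,
   while d_u + d_v <= delta_1 + delta_2.  Hence
   4 lambda_1 lambda_2 alpha_1 alpha_2 <= 4 (lambda_1 a_u) (lambda_2 a_v)
     <= (lambda_1 a_u + lambda_2 a_v)^2 <= (delta_1 + delta_2)^2.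
   The spectral theorem is used over R[i], so eigenvectors are complex and the
   Rayleigh quotients are real parts of Hermitian forms. *)

From Pilot Require Import Defs.
From HB Require Import structures.
From mathcomp Require Import all_boot all_order all_algebra ring lra zify.
From mathcomp Require Import complex spectral sesquilinear.
Import Order.TTheory GRing.Theory Num.Theory.
Set Implicit Arguments. Unset Strict Implicit. Unset Printing Implicit Defensive.
Local Open Scope ring_scope.

Lemma char_poly_conj (F : fieldType) n (P A : 'M[F]_n) : P \in unitmx ->
  char_poly (invmx P *m A *m P) = char_poly A.
Proof.
move=> Pu; rewrite /char_poly /char_poly_mx.
have -> : 'X%:M - map_mx polyC (invmx P *m A *m P) =
    map_mx polyC (invmx P) *m ('X%:M - map_mx polyC A) *m map_mx polyC P.
  rewrite mulmxBr mulmxBl !map_mxM -!mulmxA; congr (_ - _).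
  by rewrite mul_scalar_mx -scalemxAr -map_mxM mulVmx // map_mx1 scalemx1.
rewrite !det_mulmx !det_map_mx det_inv mulrC mulrA -polyCM mulfV ?mul1r //.
by rewrite -unitfE -unitmxE.
Qed.

Lemma perm_eq_enum_head (T : eqType) N (d : 'I_N -> T) a rest :
  perm_eq [seq d i | i <- enum 'I_N] (a :: rest) ->
  exists2 i, d i = a & perm_eq [seq d j | j <- rem i (enum 'I_N)] rest.
Proof.
move=> hperm.
have /mapP [i _ ea] : a \in [seq d i | i <- enum 'I_N] by rewrite (perm_mem hperm) mem_head.
exists i => //; subst a; rewrite -(perm_cons (d i)) -map_cons.
apply: (seq.perm_trans _ hperm); rewrite perm_sym; apply: perm_map.
by apply: perm_to_rem; rewrite mem_enum.
Qed.

Lemma mem_rem_enum N (i j : 'I_N) : (j \in rem i (enum 'I_N)) = (j != i).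
Proof. by rewrite (mem_rem_uniq _ (enum_uniq _)) inE mem_enum andbT. Qed.

Lemma perm_eq_enum_head2 (T : eqType) N (d : 'I_N -> T) a0 a1 rest :
  perm_eq [seq d i | i <- enum 'I_N] [:: a0, a1 & rest] ->
  exists i0 i1, [/\ i0 != i1, d i0 = a0 & d i1 = a1].
Proof.
case/perm_eq_enum_head => i0 e0 /perm_mem hp.
have /mapP [i1 + e1] : a1 \in [seq d j | j <- rem i0 (enum 'I_N)].
  by rewrite hp mem_head.
by rewrite mem_rem_enum => ?; exists i0, i1; rewrite eq_sym.
Qed.

Section SortedWeights.
Variable F : numDomainType.
Implicit Types (a : seq F) (x : F).

Lemma sorted_head_le x0 a x :
  sorted (fun x y => x <= y) (x0 :: a) -> x \in x0 :: a -> x0 <= x.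
Proof.
move=> /= hp; rewrite inE => /orP[/eqP->//|xa].
by have /allP := order_path_min (@le_trans _ F) hp; apply.
Qed.

Variables (N : nat) (d p : 'I_N -> F).

Lemma head_le_convex_comb a :
  perm_eq [seq d i | i <- enum 'I_N] a -> sorted (fun x y => x <= y) a ->
  (forall i, 0 <= p i) -> \sum_i p i = 1 ->
  a`_0 <= \sum_i d i * p i.
Proof.
case: a => [|x0 a] hperm hs hp hsum.
  have /perm_size := hperm; rewrite size_map size_enum_ord => N0.
  by move: hsum; subst N; rewrite big_ord0 => /eqP; rewrite eq_sym oner_eq0.
rewrite /= -[x0]mulr1 -hsum mulr_sumr; apply: ler_sum => i _.
apply: ler_wpM2r => //; apply: sorted_head_le hs _.
by rewrite -(perm_mem hperm) map_f ?mem_enum.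
Qed.

Lemma head2_le_capped_comb a :
  perm_eq [seq d i | i <- enum 'I_N] a -> sorted (fun x y => x <= y) a ->
  (1 < size a)%N ->
  (forall i, 0 <= p i) -> (forall i, p i <= 1) -> \sum_i p i = 2%:R ->
  a`_0 + a`_1 <= \sum_i d i * p i.
Proof.
case: a => [|x0 [|x1 a]] // /perm_eq_enum_head[i0 e0 /perm_mem hp] hs _ p0 p1 hsum.
have [x01 hs1] : x0 <= x1 /\ sorted (fun x y => x <= y) (x1 :: a).
  by move: hs => /= /andP[].
have le_x1 j : j != i0 -> x1 <= d j.
  by move=> ji0; apply: sorted_head_le hs1 _; rewrite -hp map_f ?mem_rem_enum.
have rest_ge : x1 * (2%:R - p i0) <= \sum_(j | j != i0) d j * p j.
  rewrite -hsum (bigD1 i0) //= [p i0 + _]addrC addrK mulr_sumr.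
  by apply: ler_sum => j ji0; apply: ler_wpM2r => //; apply: le_x1.
rewrite (bigD1 i0) //= e0; apply: le_trans (lerD (lexx _) rest_ge).
have -> : x0 * p i0 + x1 * (2%:R - p i0) = x0 + x1 + (x1 - x0) * (1 - p i0) by ring.
by rewrite lerDl mulr_ge0 // subr_ge0.
Qed.

End SortedWeights.

Lemma lyapunov_product_bound (F : realFieldType) (l0 l1 a0 a1 au av d0 d1 du dv : F) :
  0 <= l0 -> 0 <= l1 -> 0 < a0 -> a0 <= a1 ->
  a0 <= au -> a0 <= av -> a0 + a1 <= au + av ->
  l0 * au <= du -> l1 * av <= dv -> du + dv <= d0 + d1 ->
  l0 * l1 <= (d0 + d1) ^+ 2 / (4%:R * a0 * a1).
Proof.
move=> l0_ge0 l1_ge0 a0_gt0 a01 a0u a0v a01uv ldu ldv dd.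
have prod_a : a0 * a1 <= au * av by nra.
have sum_ge0 : 0 <= l0 * au + l1 * av by nra.
have amgm : 4%:R * (l0 * au) * (l1 * av) <= (l0 * au + l1 * av) ^+ 2.
  by rewrite -subr_ge0 (_ : _ - _ = (l0 * au - l1 * av) ^+ 2) ?sqr_ge0 //; ring.
rewrite ler_pdivlMr; last by rewrite !mulr_gt0 ?ltr0n //; lra.
apply: le_trans (_ : l0 * l1 * (4%:R * (au * av)) <= _).
  by rewrite ler_wpM2l ?mulr_ge0 // -mulrA ler_wpM2l ?ler0n.
rewrite (_ : _ * (_ * _) = 4%:R * (l0 * au) * (l1 * av)); last by ring.
apply: le_trans amgm _; rewrite lerXn2r ?nnegrE //; lra.
Qed.

Local Open Scope sesquilinear_scope.

Section Orthonormal.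
Variables (C : numClosedFieldType) (N : nat).

Definition orthonormal2 (u v : 'rV[C]_N) :=
  [/\ u *m u^t* = 1%:M, v *m v^t* = 1%:M & u *m v^t* = 0].

Lemma orthonormal2_mulmx (P : 'M[C]_N) u v :
  P \is unitarymx -> orthonormal2 (u *m P) (v *m P) = orthonormal2 u v.
Proof.
move=> Pu; have e x y : (x *m P) *m (y *m P)^t* = x *m y^t*.
  by rewrite trmx_mul map_mxM mulmxA mulmxtVK.
by rewrite /orthonormal2 !e.
Qed.

Lemma orthonormal2_row (P : 'M[C]_N) i j :
  P \is unitarymx -> i != j -> orthonormal2 (row i P) (row j P).
Proof.
move=> /unitarymxP PP ij; have e k l : row k P *m (row l P)^t* = (k == l)%:R%:M.
  apply/matrixP => a b; rewrite !ord1 [RHS]mxE eqxx mulr1n.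
  have <- : (1%:M : 'M[C]_N) k l = (k == l)%:R by rewrite mxE.
  by rewrite -PP !mxE; apply: eq_bigr => m _; rewrite !mxE.
by rewrite /orthonormal2 !e !eqxx (negbTE ij) raddf0.
Qed.

(* Bessel's inequality for the basis vector [e_i] against [u] and [v]: the
   diagonal entry of the orthogonal projection onto [span(u, v)] is in [0, 1]. *)
Lemma orthonormal2_coord_le1 u v i : orthonormal2 u v ->
  u 0 i * (u 0 i)^* + v 0 i * (v 0 i)^* <= 1.
Proof.
case=> hu hv huv.
have hvu : v *m u^t* = 0.
  have := congr1 (fun X => X^t*) huv; rewrite /= trmx_mul map_mxM trmxCK => ->.
  by apply/matrixP => a b; rewrite !mxE conjC0.
pose W := col_mx u v.
have hW : W *m W^t* = 1%:M.
  rewrite /W tr_col_mx map_row_mx mul_col_row hu hv huv hvu.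
  by rewrite [RHS]scalar_mx_block.
pose Q := W^t* *m W.
have idemQ : Q *m Q = Q by rewrite /Q mulmxA -[W^t* *m W *m W^t*]mulmxA hW mulmx1.
have Qii : Q i i = u 0 i * (u 0 i)^* + v 0 i * (v 0 i)^*.
  rewrite /Q mxE big_split_ord /= !big_ord1 !mxE /W.
  rewrite (unsplitK (inl _ : _ + 'I_1)) (unsplitK (inr _ : 'I_1 + _)) /=.
  by rewrite mulrC [_^* * _]mulrC.
rewrite -Qii; clearbody W.
have hermQ k l : Q k l = (Q l k)^*.
  rewrite /Q !mxE rmorph_sum; apply: eq_bigr => j _.
  by rewrite !mxE rmorphM /= conjCK mulrC.
have Qii_ge0 : 0 <= Q i i by rewrite Qii addr_ge0 // mul_conjC_ge0.
have Qii_sq : Q i i * Q i i <= Q i i.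
  rewrite -{3}idemQ [(Q *m Q) i i]mxE (bigD1 i) //= lerDl sumr_ge0 // => k _.
  by rewrite (hermQ k i) mul_conjC_ge0.
have [->|Qii_neq0] := eqVneq (Q i i) 0; first by rewrite ler01.
have Qii_gt0 : 0 < Q i i by rewrite lt_def Qii_neq0 Qii_ge0.
by rewrite -(ler_pM2l Qii_gt0) mulr1.
Qed.

End Orthonormal.

Section RealSymmetric.
Variable R : rcfType.
Local Notation C := R[i].

Lemma conjCE (x : C) : Num.conj x = conjc x.
Proof. by case: x. Qed.

Lemma toC_hermsymmx N (M : 'M[R]_N) : sym_mx M -> toC M \is hermsymmx.
Proof.
move=> symM; apply/is_hermitianmxP; rewrite expr0 scale1r.
by apply/matrixP => i j; rewrite !mxE conjCE conjc_real -[in RHS]symM mxE.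
Qed.

Lemma sym_spectral N (M : 'M[R]_N) (a : seq R) : sym_mx M -> eigenvalues_of M a ->
  exists P : 'M[C]_N, exists d : 'I_N -> C,
   [/\ P \is unitarymx, perm_eq [seq d i | i <- enum 'I_N] (map (fun x => x%:C%C) a) &
       toC M = P^t* *m diag_mx (\row_i d i) *m P].
Proof.
move=> symM eigM.
have := @orthomx_spectralP _ _ (toC M).
rewrite hermitian_normalmx ?toC_hermsymmx // => /elimT/(_ isT) decM.
set P := spectralmx (toC M) in decM; set s := spectral_diag (toC M) in decM.
have Pu : P \is unitarymx by apply: spectral_unitarymx.
exists P, (fun i => s 0 i); split => //; last first.
  rewrite {1}decM invmx_unitary //.
  by congr (_ *m diag_mx _ *m _); apply/rowP => i; rewrite !mxE.
have charC : char_poly (toC M) = \prod_(x <- a) ('X - (x%:C%C)%:P).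
  by rewrite -map_char_poly eigM map_prod_XsubC.
apply: prod_XsubC_eq; rewrite !big_map -charC decM char_poly_conj ?unitarymx_unit //.
rewrite char_poly_trig ?diag_mx_is_trig //.
by apply: eq_bigr => i _; rewrite mxE eqxx mulr1n.
Qed.

Lemma size_eigenvalues N (M : 'M[R]_N) s : eigenvalues_of M s -> size s = N.
Proof.
move=> eigM; have := size_char_poly M.
by rewrite eigM size_prod_XsubC => -[].
Qed.

Lemma eigenvalues_of_eigenvector N (M : 'M[R]_N) s x : eigenvalues_of M s -> x \in s ->
  exists2 v : 'rV[R]_N, v *m M = x *: v & v != 0.
Proof.
move=> eigM xs; apply/eigenvalueP.
by rewrite eigenvalue_root_char eigM root_prod_XsubC.
Qed.

Lemma sym_top2_eigenvectors N (M : 'M[R]_N) l0 l1 s :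
  sym_mx M -> eigenvalues_of M [:: l0, l1 & s] ->
  exists u v : 'rV[C]_N,
    [/\ orthonormal2 u v, u *m toC M = l0%:C%C *: u & v *m toC M = l1%:C%C *: v].
Proof.
move=> symM eigM; have [P [d [Pu dP decM]]] := sym_spectral symM eigM.
have [i0 [i1 [i01 <- <-]]] := perm_eq_enum_head2 dP.
have row_eigen i : row i P *m toC M = d i *: row i P.
  rewrite decM -row_mul !mulmxA.
  have /unitarymxP -> := Pu.
  by rewrite mul1mx row_mul row_diag_mx mxE -scalemxAl -rowE.
exists (row i0 P), (row i1 P).
by rewrite !row_eigen; split => //; apply: orthonormal2_row.
Qed.

Definition hquad N (M : 'M[C]_N) (u : 'rV[C]_N) : C := (u *m M *m u^t*) 0 0.

Lemma hquadD N (M1 M2 : 'M[C]_N) u : hquad (M1 + M2) u = hquad M1 u + hquad M2 u.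
Proof. by rewrite /hquad mulmxDr mulmxDl mxE. Qed.

Lemma hquadN N (M : 'M[C]_N) u : hquad (- M) u = - hquad M u.
Proof. by rewrite /hquad mulmxN mulNmx mxE. Qed.

Lemma hquad_mulmx_eigenl N (S M : 'M[C]_N) u c :
  u *m S = c *: u -> hquad (S *m M) u = c * hquad M u.
Proof. by move=> uS; rewrite /hquad mulmxA uS -!scalemxAl mxE. Qed.

Lemma hquad_mulmx_eigenr N (S M : 'M[C]_N) u c :
  S *m u^t* = c *: u^t* -> hquad (M *m S) u = c * hquad M u.
Proof. by move=> Su; rewrite /hquad mulmxA -(mulmxA (u *m M)) Su -scalemxAr mxE. Qed.

(* Writing [toC M = P^t* diag(d) P], the Hermitian form of [M] at [u] is the
   [d]-weighted sum of the squared moduli of the coordinates of [u P^t*]. *)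
Lemma hquad_eigen_weights N (M : 'M[R]_N) (a : seq R) (u v : 'rV[C]_N) :
  sym_mx M -> eigenvalues_of M a -> orthonormal2 u v ->
  exists d pu pv : 'I_N -> C,
   [/\ perm_eq [seq d i | i <- enum 'I_N] (map (fun x => x%:C%C) a),
       hquad (toC M) u = \sum_i d i * pu i /\ hquad (toC M) v = \sum_i d i * pv i,
       (forall i, 0 <= pu i) /\ (forall i, 0 <= pv i),
       (forall i, pu i + pv i <= 1) &
       \sum_i pu i = 1 /\ \sum_i pv i = 1].
Proof.
move=> symM eigM uv.
have [P [d [Pu dP decM]]] := sym_spectral symM eigM.
pose coord (x : 'rV[C]_N) i := (x *m P^t*) 0 i * ((x *m P^t*) 0 i)^*.
have hquad_coord x : hquad (toC M) x = \sum_i d i * coord x i.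
  rewrite /hquad decM.
  have -> : x *m (P^t* *m diag_mx (\row_i d i) *m P) *m x^t* =
      (x *m P^t*) *m diag_mx (\row_i d i) *m (x *m P^t*)^t*.
    by rewrite trmx_mul map_mxM trmxCK !mulmxA.
  rewrite mxE; apply: eq_bigr => i _.
  by rewrite /coord mul_mx_diag !mxE; ring.
have uvP : orthonormal2 (u *m P^t*) (v *m P^t*).
  by rewrite orthonormal2_mulmx ?trmxC_unitary.
have coord_sum (y : 'rV[C]_N) : y *m y^t* = 1%:M -> \sum_i y 0 i * (y 0 i)^* = 1.
  move=> /(congr1 (fun X : 'M[C]_1 => X 0 0)); rewrite !mxE eqxx mulr1n => <-.
  by apply: eq_bigr => i _; rewrite !mxE.
exists d, (coord u), (coord v); split => //.
- by split => i; apply: mul_conjC_ge0.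
- by move=> i; apply: orthonormal2_coord_le1.
- by case: uvP => uu vv _; rewrite !coord_sum.
Qed.

Lemma lecRe (x : R) (z : C) : x%:C%C <= z -> x <= complex.Re z.
Proof. by rewrite lecE => /andP[]. Qed.

Lemma gecRe (x : R) (z : C) : z <= x%:C%C -> complex.Re z <= x.
Proof. by rewrite lecE => /andP[]. Qed.

Lemma ky_fan_min2 N (M : 'M[R]_N) a (u v : 'rV[C]_N) :
  sym_mx M -> eigs_increasing M a -> (1 < size a)%N -> orthonormal2 u v ->
  [/\ a`_0 <= complex.Re (hquad (toC M) u), a`_0 <= complex.Re (hquad (toC M) v) &
      a`_0 + a`_1 <= complex.Re (hquad (toC M) u) + complex.Re (hquad (toC M) v)].
Proof.
move=> symM [eigM sorted_a] size_a uv.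
have [d [pu [pv [dP [-> ->] [pu0 pv0] p1 [su sv]]]]] := hquad_eigen_weights symM eigM uv.
have sorted_aC : sorted (fun x y => x <= y) (map (fun x => x%:C%C) a).
  by rewrite sorted_map; apply: sub_sorted sorted_a => x y; rewrite /relpre /= lecR.
have a0C : (map (fun x => x%:C%C) a)`_0 = (a`_0)%:C%C.
  by rewrite (nth_map 0) // (ltn_trans _ size_a).
have a1C : (map (fun x => x%:C%C) a)`_1 = (a`_1)%:C%C by rewrite (nth_map 0).
split; try by apply: lecRe; rewrite -a0C; apply: head_le_convex_comb.
rewrite -raddfD /=; apply: lecRe; rewrite rmorphD /= -a0C -a1C -big_split /=.
under eq_bigr do rewrite -mulrDr.
apply: head2_le_capped_comb; rewrite ?size_map //.
- by move=> i; rewrite addr_ge0.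
- by rewrite big_split /= su sv.
Qed.

Lemma ky_fan_max2 N (M : 'M[R]_N) a (u v : 'rV[C]_N) :
  sym_mx M -> eigs_decreasing M a -> (1 < size a)%N -> orthonormal2 u v ->
  complex.Re (hquad (toC M) u) + complex.Re (hquad (toC M) v) <= a`_0 + a`_1.
Proof.
move=> symM [eigM sorted_a] size_a uv.
have [d [pu [pv [dP [-> ->] [pu0 pv0] p1 [su sv]]]]] := hquad_eigen_weights symM eigM uv.
pose f (x : R) : C := - x%:C%C.
have sorted_f : sorted (fun x y => x <= y) (map f a).
  by rewrite sorted_map; apply: sub_sorted sorted_a => x y; rewrite /relpre /f /= lerN2 lecR.
have a0f : (map f a)`_0 = - (a`_0)%:C%C by rewrite (nth_map 0) // (ltn_trans _ size_a).
have a1f : (map f a)`_1 = - (a`_1)%:C%C by rewrite (nth_map 0).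
have dfP : perm_eq [seq - d i | i <- enum 'I_N] (map f a).
  by rewrite (map_comp -%R d) (map_comp -%R (fun x => x%:C%C)) perm_map.
have := head2_le_capped_comb (p := fun i => pu i + pv i) dfP sorted_f.
rewrite size_map big_split /= su sv.
move=> /(_ size_a (fun i => addr_ge0 (pu0 i) (pv0 i)) p1 erefl).
rewrite a0f a1f -opprD lerNl.
under eq_bigr do rewrite mulNr mulrDr.
rewrite sumrN opprK big_split /= -rmorphD -raddfD => ?.
exact: gecRe.
Qed.

Lemma Re_hquad_toC N (M : 'M[R]_N) (u : 'rV[C]_N) :
  complex.Re (hquad (toC M) u) =
    (Defs.ReM u *m M *m (Defs.ReM u)^T) 0 0 + (Defs.ImM u *m M *m (Defs.ImM u)^T) 0 0.
Proof.
rewrite /hquad !mxE raddf_sum -big_split; apply: eq_bigr => k _ /=.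
rewrite !mxE mulr_suml raddf_sum !mulr_suml -big_split; apply: eq_bigr => j _ /=.
by rewrite !mxE conjCE; case: (u 0 j) => a b; case: (u 0 k) => c e /=; ring.
Qed.

Lemma psd_real_Re_hquad_ge0 N (M : 'M[R]_N) (u : 'rV[C]_N) :
  psd_real M -> 0 <= complex.Re (hquad (toC M) u).
Proof.
case=> _ psdM; rewrite Re_hquad_toC addr_ge0 //.
  by have := psdM (Defs.ReM u)^T; rewrite trmxK.
by have := psdM (Defs.ImM u)^T; rewrite trmxK.
Qed.

Lemma row_sqnorm_gt0 N (v : 'rV[R]_N) : v != 0 -> 0 < (v *m v^T) 0 0.
Proof.
move=> v_neq0; have sq_ge0 i : 0 <= v 0 i * v^T i 0 by rewrite mxE -expr2 sqr_ge0.
rewrite mxE lt_def sumr_ge0 ?andbT //; apply: contra v_neq0 => /eqP /psumr_eq0P sum0.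
apply/eqP/rowP => j; have /eqP := sum0 (fun i _ => sq_ge0 i) j isT.
by rewrite mxE -expr2 sqrf_eq0 mxE => /eqP.
Qed.

Lemma psd_complex_psd_Re_part N (Z W : 'M[R]_N) (x : 'rV[R]_N) :
  psd_complex (toC Z + (Complex 0 1)%C *: toC W) -> 0 <= (x *m Z *m x^T) 0 0.
Proof.
move=> /(_ (toC x^T)) [_]; congr (_ <= _).
rewrite !mxE raddf_sum; apply: eq_bigr => k _ /=.
rewrite !mxE mulr_suml raddf_sum !mulr_suml; apply: eq_bigr => j _ /=.
by rewrite !mxE /=; ring.
Qed.

Lemma eigenvalue_ge0_psd_complex N (Z W : 'M[R]_N) s x :
  eigenvalues_of Z s -> x \in s ->
  psd_complex (toC Z + (Complex 0 1)%C *: toC W) -> 0 <= x.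
Proof.
move=> eigZ xs psdZ; have [v vZ v_neq0] := eigenvalues_of_eigenvector eigZ xs.
have := psd_complex_psd_Re_part v psdZ.
by rewrite vZ -scalemxAl mxE pmulr_lge0 // row_sqnorm_gt0.
Qed.

Lemma eigenvalue_gt0_negdef N (M : 'M[R]_N) s x :
  eigenvalues_of (- M) s -> x \in s -> negdef_real M -> 0 < x.
Proof.
move=> eigM xs [_ negM].
have [v vM v_neq0] := eigenvalues_of_eigenvector eigM xs.
have := negM v^T; rewrite trmx_eq0 trmxK => /(_ v_neq0).
have -> : v *m M = - (x *: v) by rewrite -vM mulmxN opprK.
by rewrite mulNmx -scalemxAl mxE [X in - X]mxE oppr_lt0 pmulr_lgt0 // row_sqnorm_gt0.
Qed.

Lemma sym_mx_lyapunov_const N (A S D : 'M[R]_N) :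
  sym_mx S -> sym_mx (A *m S + S *m A^T + D) -> sym_mx D.
Proof.
rewrite /sym_mx !linearD /= !trmx_mul !trmxK => -> e.
by apply: (addrI (A *m S + S *m A^T)); rewrite -[RHS]e [A *m S + _]addrC.
Qed.

Lemma Re_real_mul (x : R) (z : C) : complex.Re (x%:C%C * z) = x * complex.Re z.
Proof. by case: z => a b /=; ring. Qed.

Lemma lyapunov_eigen_bound N (A S D : 'M[R]_N) (u : 'rV[C]_N) (c : R) :
  sym_mx S -> u *m toC S = c%:C%C *: u -> psd_real (A *m S + S *m A^T + D) ->
  c * complex.Re (hquad (toC (- (A + A^T))) u) <= complex.Re (hquad (toC D) u).
Proof.
move=> symS uS /(psd_real_Re_hquad_ge0 u).
have Su : toC S *m u^t* = c%:C%C *: u^t*.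
  have hermS : (toC S)^t* = toC S.
    by have /is_hermitianmxP := toC_hermsymmx symS; rewrite expr0 scale1r => <-.
  rewrite -hermS -map_mxM -trmx_mul uS.
  by rewrite linearZ /= map_mxZ /= conjCE conjc_real.
rewrite [toC _]map_mxD map_mxD !map_mxM !hquadD (hquad_mulmx_eigenr _ Su).
rewrite (hquad_mulmx_eigenl _ uS) -mulrDr -hquadD -map_mxD.
by rewrite [toC (- _)]map_mxN hquadN raddfD /= Re_real_mul raddfN mulrN => ?; lra.
Qed.

End RealSymmetric.

Theorem lemma3 (R : rcfType) (n L : nat) (Hn : (0 < n)%N)
  (H : 'M[R]_(2 * n)) (Ct : 'M[R[i]]_(L, 2 * n)) (sigma : 'M[R]_(2 * n))
  (lam alpha delta : seq R) :
  let A := drift H Ct in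
  let D := diffusion Ct in
  sym_mx H ->
  negdef_real (A + A^T) ->
  eigs_decreasing D delta ->
  all (fun d => 0 < d) delta ->
  sym_mx sigma ->
  psd_complex (toC sigma + (Complex 0 1)%C *: toC (Omega R n)) ->
  psd_real (A *m sigma + sigma *m A^T + D) ->
  eigs_decreasing sigma lam ->
  eigs_increasing (- (A + A^T)) alpha ->
  lam`_0 * lam`_1 <=
    (delta`_0 + delta`_1) ^+ 2 / (4%:R * alpha`_0 * alpha`_1).
Proof.
move=> A D _ negA eigD _ symS psdS lyap eigS eigA; clearbody A D.
have symD := sym_mx_lyapunov_const symS lyap.1.
have symA : sym_mx (- (A + A^T)) by rewrite /sym_mx linearN /= negA.1.
have size2 (M : 'M[R]_(2 * n)) s : eigenvalues_of M s -> (1 < size s)%N.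
  by move/size_eigenvalues ->; lia.
case: lam eigS (size2 _ _ eigS.1) => [|l0 [|l1 lam]] // eigS _.
case: alpha eigA (size2 _ _ eigA.1) => [|a0 [|a1 alpha]] // eigA size_a.
have [u [v [uv uS vS]]] := sym_top2_eigenvectors symS eigS.1.
have [au av auv] := ky_fan_min2 symA eigA size_a uv.
have dd := ky_fan_max2 symD eigD (size2 _ _ eigD.1) uv.
have l_ge0 x : x \in [:: l0, l1 & lam] -> 0 <= x.
  by move=> xl; apply: eigenvalue_ge0_psd_complex eigS.1 xl psdS.
apply: (lyapunov_product_bound _ _ _ _ au av auv
  (lyapunov_eigen_bound symS uS lyap) (lyapunov_eigen_bound symS vS lyap) dd).
- by rewrite l_ge0 ?mem_head.
- by rewrite l_ge0 // !inE eqxx orbT.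
- by apply: eigenvalue_gt0_negdef eigA.1 _ negA; rewrite mem_head.
- by case: eigA => _ /= /andP[].
Qed.
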